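(* Let $r \geq 2$, let $\mathcal{F}$ be a collection of $r$-uniform hypergraphs, let $0<p<1$, let $\epsilon>0$, and let $c = c(p,\mathcal{F})$. Then there exist $\eta, \gamma, \lambda > 0$, an integer $m$ and $n_0$ (depending only on $\mathcal{F}, p, \epsilon$) such that the following holds. Let $V$ be a vertex set of size $n > n_0$ and let $\mathcal{A}$ be a collection of $r$-uniform hypergraphs on $V$ with $\mu_n(\mathcal{A}) > 2^{(-c+\epsilon)\binom{n}{r}}$. Let $\mathcal{D} = \{D_1,\ldots,D_d\}$ be a partial Steiner system with parameters $(r,m,n)$ on $V$ with $d \geq (1-\lambda)\binom{n}{r}\binom{m}{r}^{-1}$. Let \[ I = \{ i \in [d] : \mu_n(\{G \in \mathcal{A} : \mathcal{F} < G[D_i]\}) \geq \gamma\, \mu_n(\mathcal{A})\}. \] Then $|I| \geq \eta d$.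
   Context: $G(k,p)$ denotes the random $r$-uniform hypergraph on $k$ labelled vertices in which each $r$-subset is an edge independently with probability $p$; for a collection $\mathcal{C}$ of $r$-uniform hypergraphs on a common $k$-vertex set, $\mu_k(\mathcal{C}) = \Pr[G(k,p) \in \mathcal{C}]$. The constant $c(p,\mathcal{F})$ is defined by $\Pr[G(n,p)$ has no induced subgraph isomorphic to a member of $\mathcal{F}] = 2^{(-c+o(1))\binom{n}{r}}$ as $n\to\infty$ (this limit exists). For a hypergraph $G$ and vertex subset $D$, $G[D]$ is the induced subhypergraph on $D$, and $\mathcal{F} < H$ means $H$ contains an induced subgraph isomorphic to a member of $\mathcal{F}$. A partial Steiner system with parameters $(r,m,n)$ on an $n$-set $V$ is a collection $\mathcal{D}$ of $m$-element subsets of $V$ such that every $r$-element subset of $V$ is contained in at most one member of $\mathcal{D}$. *)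

From HB Require Import structures.
From mathcomp Require Import all_boot all_order all_algebra.
From mathcomp Require Import boolp classical_sets reals exp.
Set Implicit Arguments. Unset Strict Implicit. Unset Printing Implicit Defensive.
Import Order.TTheory GRing.Theory Num.Theory.
Local Open Scope ring_scope.

Definition hypergraph (T : finType) := {set {set T}}.

Definition uniform (r : nat) (T : finType) (G : hypergraph T) : bool :=
  [forall e in G, #|e| == r].

(* A family F of r-uniform hypergraphs, each member given (up to
   isomorphism) on a labelled vertex set 'I_k. *)
Definition hfamily := forall k : nat, hypergraph 'I_k -> Prop.

(* F < H : H contains an induced subhypergraph isomorphic to a member of F.
   An injection f : 'I_k -> T gives an isomorphism between the pulled-back
   hypergraph on 'I_k and the induced subhypergraph H[f('I_k)]. *)
Definition contains (F : hfamily) (T : finType) (H : hypergraph T) : Prop :=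
  exists (k : nat) (f : 'I_k -> T), injective f /\
    F k [set e : {set 'I_k} | (f @: e) \in H].

Definition induced (T : finType) (G : hypergraph T) (D : {set T}) :
  hypergraph {x : T | x \in D} :=
  [set e : {set {x : T | x \in D}} | ((fun x => val x) @: e) \in G].

(* mu(C) = Pr[G(T,p) \in C] for the random r-uniform hypergraph on T,
   each r-subset being an edge independently with probability p. *)
Definition mu (R : realType) (r : nat) (p : R) (T : finType)
  (C : pred (hypergraph T)) : R :=
  \sum_(G : hypergraph T | uniform r G && C G)
     p ^+ #|G| * (1 - p) ^+ ('C(#|T|, r) - #|G|).

Definition free_prob (R : realType) (r : nat) (p : R) (F : hfamily) (k : nat) : R :=
  mu r p (fun G : hypergraph 'I_k => ~~ `[< contains F G >]).

(* c = c(p,F): Pr[G(n,p) F-free] = 2^{(-c+o(1)) C(n,r)}. *)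
Definition is_c (R : realType) (r : nat) (p : R) (F : hfamily) (c : R) : Prop :=
  forall delta : R, 0 < delta -> exists N : nat, forall n : nat, (N <= n)%N ->
    powR 2 ((- c - delta) * ('C(n, r))%:R) <= free_prob r p F n /\
    free_prob r p F n <= powR 2 ((- c + delta) * ('C(n, r))%:R).

Definition partial_steiner (T : finType) (r m d : nat) (D : 'I_d -> {set T}) : Prop :=
  injective D /\ (forall i, #|D i| = m) /\
  (forall S : {set T}, #|S| = r -> #|[set i | S \subset D i]| <= 1)%N.

From HB Require Import structures.
From mathcomp Require Import all_boot all_order all_algebra.
From mathcomp Require Import boolp classical_sets reals exp.
(* fintype and finset again, so that their lemma names shadow those of classical_sets. *)
From mathcomp Require Import fintype finset zify ring lra.
Import Order.TTheory GRing.Theory Num.Theory.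
Local Open Scope ring_scope.
Set Implicit Arguments. Unset Strict Implicit. Unset Printing Implicit Defensive.

(* Suppose fewer than th d / 4 of the blocks D_i are good, and let Y(G) count the
   blocks with F < G[D_i]. Then Y has small mean on A, so by Markov's inequality
   at least half of mu(A) comes from graphs in A with Y <= th d. The blocks of a
   partial Steiner system span disjoint sets of r-sets, so the events F < G[D_i]
   are independent and each fails with probability free_prob m <= 2^a, where
   a = (-c + eps/8) C(m,r). An exponential-moment (Chernoff) bound then gives
   mu(A) <= 2^(d + 1 + a (1 - th) d), and since d C(m,r) >= (1 - th) C(n,r) this
   is at most 2^((-c + eps) C(n,r)), contradicting the assumption on mu(A). *)

Section RandomSubset.
Variables (R : realType) (p : R) (X : finType).

Definition rand_weight (U S : {set X}) : R :=
  \prod_(x in U) (if x \in S then p else 1 - p).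

(* Expectation of h over the random subset of U containing each element
   independently with probability p. *)
Definition rand_expect (U : {set X}) (h : {set X} -> R) : R :=
  \sum_(S : {set X} | S \subset U) rand_weight U S * h S.

Lemma eq_rand_expect (U : {set X}) (f g : {set X} -> R) :
  (forall S : {set X}, S \subset U -> f S = g S) -> rand_expect U f = rand_expect U g.
Proof. by move=> fg; apply: eq_bigr => S /fg ->. Qed.

Lemma rand_weightI (U S : {set X}) : rand_weight U S = rand_weight U (S :&: U).
Proof. by apply: eq_bigr => x xU; rewrite !inE xU andbT. Qed.

Lemma rand_weightU (U1 U2 S : {set X}) : [disjoint U1 & U2] ->
  rand_weight (U1 :|: U2) S = rand_weight U1 S * rand_weight U2 S.
Proof. by move=> dU; rewrite /rand_weight -bigU //; apply: eq_bigl => x; rewrite !inE. Qed.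

Lemma setUD_subset (B U : {set X}) : B \subset U -> U = B :|: (U :\: B).
Proof. by move=> sBU; rewrite -{1}(setID U B) (setIidPr sBU). Qed.

Lemma disjoint_setD (B U : {set X}) : [disjoint B & U :\: B].
Proof. by rewrite disjoint_sym disjoints_subset subsetDr. Qed.

Lemma rand_expect_split (U1 U2 : {set X}) (f g : {set X} -> R) :
  [disjoint U1 & U2] ->
  rand_expect (U1 :|: U2) (fun S => f (S :&: U1) * g (S :&: U2)) =
  rand_expect U1 f * rand_expect U2 g.
Proof.
move=> dU; rewrite /rand_expect mulr_suml.
under [RHS]eq_bigr do rewrite mulr_sumr.
rewrite pair_big /= (reindex_onto (fun q : {set X} * {set X} => q.1 :|: q.2)
                        (fun S => (S :&: U1, S :&: U2))) /=; last first.
  by move=> S sS; rewrite -setIUr; apply/setIidPl.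
have notboth x : x \in U1 -> x \in U2 -> False.
  by move=> x1 x2; move/disjoint_setI0/setP: dU => /(_ x); rewrite !inE x1 x2.
apply: eq_big => [[A B]|[A B]] /=; last first.
  case/andP=> _ /eqP [eA eB].
  rewrite rand_weightU // rand_weightI eA [rand_weight U2 _]rand_weightI eB.
  by rewrite mulrACA.
apply/idP/idP => [/andP [_ /eqP [<- <-]]|/andP [sA sB]]; first by rewrite !subsetIr.
rewrite setUSS //=.
apply/eqP; congr (_, _); apply/setP => x; rewrite !inE.
  case xA: (x \in A); first by rewrite (subsetP sA).
  by case xB: (x \in B) => //=; apply/negP => /notboth; apply; apply: (subsetP sB).
case xB: (x \in B); first by rewrite orbT (subsetP sB).
by case xA: (x \in A) => //=; apply/negP => x2; apply: notboth x2; apply: (subsetP sA).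
Qed.

Lemma rand_expect1 (U : {set X}) : rand_expect U (fun => 1) = 1.
Proof.
elim: {U}_.+1 {-2}U (ltnSn #|U|) => // n IHn U.
have [->|[x xU]] := set_0Vmem U => [_|cU].
  rewrite /rand_expect (big_pred1 set0) => [|S]; last by rewrite subset0.
  by rewrite /rand_weight big_set0 mulr1.
have IHx : rand_expect (U :\ x) (fun => 1) = 1.
  by apply: IHn; move: cU; rewrite (cardsD1 x U) xU.
have Ex1 : rand_expect [set x] (fun => 1) = 1.
  rewrite /rand_expect (eq_bigl (fun S => S \in [set set0; [set x]])); last first.
    by move=> S; rewrite -powerset1 powersetE.
  rewrite big_setU1 ?big_set1 /= ?inE; last first.
    by apply/eqP => /setP /(_ x); rewrite !inE eqxx.
  by rewrite /rand_weight !big_set1 !inE eqxx !mulr1 subrK.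
have dx : [disjoint [set x] & U :\ x] by rewrite disjoint_setD.
transitivity (rand_expect [set x] (fun => 1) * rand_expect (U :\ x) (fun => 1)).
  rewrite -rand_expect_split // setD1K //.
  by apply: eq_rand_expect => S _; rewrite mulr1.
by rewrite Ex1 IHx mulr1.
Qed.

Lemma rand_expect_restrict (U B : {set X}) (h : {set X} -> R) :
  B \subset U -> rand_expect U (fun S => h (S :&: B)) = rand_expect B h.
Proof.
move=> sBU; rewrite [in LHS](setUD_subset sBU).
rewrite -[RHS]mulr1 -(rand_expect1 (U :\: B)) -rand_expect_split ?disjoint_setD //.
by apply: eq_rand_expect => S _; rewrite mulr1.
Qed.

Lemma rand_expect_prod (I : eqType) (s : seq I) (B : I -> {set X})
    (h : I -> {set X} -> R) (U : {set X}) :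
  uniq s -> (forall i, i \in s -> B i \subset U) ->
  {in s &, forall i j, i != j -> [disjoint B i & B j]} ->
  rand_expect U (fun S => \prod_(i <- s) h i (S :&: B i)) =
  \prod_(i <- s) rand_expect (B i) (h i).
Proof.
elim: s U => [|i0 s IHs] U /=.
  move=> _ _ _; rewrite big_nil -[RHS](rand_expect1 U).
  by apply: eq_rand_expect => S _; rewrite big_nil.
case/andP=> i0s us sBU dB; rewrite big_cons.
set U' := U :\: B i0.
have sBU' i : i \in s -> B i \subset U'.
  move=> is_; rewrite subsetD sBU ?inE ?is_ ?orbT //= disjoint_sym dB ?inE ?eqxx ?is_ ?orbT //.
  by apply: contraNneq i0s => ->.
rewrite -(IHs U') // => [|i j is_ js]; last by apply: dB; rewrite inE ?is_ ?js orbT.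
rewrite -rand_expect_split ?disjoint_setD // -(setUD_subset (sBU i0 (mem_head _ _))).
apply: eq_rand_expect => S _; rewrite big_cons; congr (_ * _).
apply: eq_big_seq => i is_; congr (h i _).
by rewrite -setIA (setIidPr (sBU' i is_)).
Qed.

Lemma rand_expectD (U : {set X}) (f g : {set X} -> R) :
  rand_expect U (fun S => f S + g S) = rand_expect U f + rand_expect U g.
Proof. by rewrite /rand_expect -big_split; apply: eq_bigr => S _; rewrite mulrDr. Qed.

Lemma rand_expectZ (U : {set X}) (a : R) (f : {set X} -> R) :
  rand_expect U (fun S => a * f S) = a * rand_expect U f.
Proof. by rewrite /rand_expect mulr_sumr; apply: eq_bigr => S _; rewrite mulrCA. Qed.

Lemma rand_expect_sum (I : finType) (U : {set X}) (f : I -> {set X} -> R) :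
  rand_expect U (fun S => \sum_i f i S) = \sum_i rand_expect U (f i).
Proof. by rewrite /rand_expect exchange_big; apply: eq_bigr => S _; rewrite mulr_sumr. Qed.

Hypotheses (p_ge0 : 0 <= p) (p_le1 : p <= 1).

Lemma rand_weight_ge0 (U S : {set X}) : 0 <= rand_weight U S.
Proof. by apply: prodr_ge0 => x _; case: ifP; rewrite ?subr_ge0. Qed.

Lemma ler_rand_expect (U : {set X}) (f g : {set X} -> R) :
  (forall S : {set X}, S \subset U -> f S <= g S) ->
  rand_expect U f <= rand_expect U g.
Proof. by move=> fg; apply: ler_sum => S /fg; apply: ler_wpM2l; apply: rand_weight_ge0. Qed.

Lemma rand_expect_ge0 (U : {set X}) (f : {set X} -> R) :
  (forall S : {set X}, S \subset U -> 0 <= f S) -> 0 <= rand_expect U f.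
Proof.
by move=> f0; rewrite -(mul0r (rand_expect U f)) -rand_expectZ; apply: ler_rand_expect => S /f0; rewrite mul0r.
Qed.

Lemma rand_expect_markov (U : {set X}) (f Y : {set X} -> R) (t : R) : 0 < t ->
  (forall S : {set X}, S \subset U -> 0 <= f S) ->
  (forall S : {set X}, S \subset U -> 0 <= Y S) ->
  2 * rand_expect U (fun S => f S * Y S) <= t * rand_expect U f ->
  rand_expect U f <= 2 * rand_expect U (fun S => f S * (Y S <= t)%R%:R).
Proof.
move=> t_gt0 f0 Y0 hfY.
have Ef : rand_expect U f = rand_expect U (fun S => f S * (t < Y S)%R%:R) +
                           rand_expect U (fun S => f S * (Y S <= t)%R%:R).
  rewrite -rand_expectD; apply: eq_rand_expect => S _.
  by rewrite -mulrDr; case: ltP; rewrite ?addr0 ?add0r mulr1.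
have markov : t * rand_expect U (fun S => f S * (t < Y S)%R%:R) <=
              rand_expect U (fun S => f S * Y S).
  rewrite -rand_expectZ; apply: ler_rand_expect => S sS; rewrite mulrCA.
  by apply: ler_wpM2l; [exact: f0|case: ltP; rewrite ?mulr1 ?mulr0 ?Y0 // => /ltW].
rewrite -(ler_pM2l t_gt0); rewrite Ef in hfY *; nra.
Qed.

End RandomSubset.

Lemma rand_expect_imset (R : realType) (p : R) (X Y : finType) (psi : Y -> X)
    (U : {set Y}) (h : {set X} -> R) : injective psi ->
  rand_expect p (psi @: U) h = rand_expect p U (fun S => h (psi @: S)).
Proof.
move=> psi_inj; rewrite /rand_expect.
rewrite (reindex_onto (fun S : {set Y} => psi @: S) (fun S => psi @^-1: S :&: U)) /=;
  last first.
  move=> S sS; apply/setP => x; apply/imsetP/idP => [[y]|xS].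
    by rewrite !inE => /andP [yS _] ->.
  have /imsetP [y yU exy] := subsetP sS x xS.
  by exists y; rewrite // !inE -exy xS yU.
apply: eq_big => S; last first.
  case/andP => _ /eqP eS; congr (_ * _).
  rewrite /rand_weight big_imset /=; last by move=> a b _ _; apply: psi_inj.
  by apply: eq_bigr => y _; rewrite mem_imset.
apply/idP/idP => [/andP [_ /eqP <-]|sSU]; first by rewrite subsetIr.
rewrite imsetS //=; apply/eqP/setP => y.
by rewrite !inE mem_imset //; case yS: (y \in S); rewrite //= (subsetP sSU).
Qed.

Section RealBounds.
Variable R : realType.

Lemma powR2D (x y : R) : 2 `^ (x + y) = 2 `^ x * 2 `^ y.
Proof. by rewrite powRD // pnatr_eq0 implybT. Qed.

Lemma ler_powR2 : {homo powR (2 : R) : x y / x <= y}.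
Proof. by apply: ler_powR; rewrite ler1n. Qed.

Lemma powR2_ge1 (x : R) : 0 <= x -> 1 <= 2 `^ x.
Proof. by move=> /ler_powR2; rewrite powRr0. Qed.

Lemma prod_powR2 (I : finType) (f : I -> R) :
  \prod_i 2 `^ (f i) = 2 `^ (\sum_i f i).
Proof. by elim/big_rec2: _ => [|i y1 y2 _ ->]; rewrite ?powRr0 ?powR2D. Qed.

Lemma chernoff_pointwise (I : finType) (b : I -> bool) (a t : R) :
  a <= 0 -> \sum_i (b i)%:R <= t ->
  1 <= 2 `^ (a * (#|I|%:R - t)) * \prod_i (if b i then 1 else 2 `^ (- a)).
Proof.
move=> a_le0 bt.
rewrite (eq_bigr (fun i => 2 `^ (- a * (1 - (b i)%:R)))); last first.
  by move=> i _; case: (b i); rewrite ?subrr ?mulr0 ?powRr0 ?subr0 ?mulr1.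
rewrite prod_powR2 -powR2D -mulr_sumr sumrB sumr_const -mulr_natl mulr1.
by apply: powR2_ge1; rewrite [#|_|]cardT -cardE; nra.
Qed.

Lemma sum_le_card_threshold (I : finType) (g : I -> R) (b c : R) :
  0 <= c -> (forall i, g i <= b) ->
  \sum_i g i <= #|[set i | c <= g i]|%:R * b + #|I|%:R * c.
Proof.
move=> c_ge0 gb.
apply: (@le_trans _ _ (\sum_i ((if c <= g i then b else 0) + c))).
  apply: ler_sum => i _; case: (leP c (g i)) => [_|/ltW]; last by rewrite add0r.
  by apply: le_trans (gb i) _; rewrite lerDl.
by rewrite big_split /= -big_mkcond !sumr_const cardsE !mulr_natl.
Qed.

End RealBounds.

Section RandomHypergraph.
Variables (R : realType) (r : nat) (p : R).

Definition rsets (T : finType) : {set {set T}} := [set e : {set T} | #|e| == r].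

Definition rsets_in (T : finType) (D : {set T}) : {set {set T}} :=
  [set e : {set T} | (#|e| == r) && (e \subset D)].

Lemma rsets_in_sub (T : finType) (D : {set T}) : rsets_in D \subset rsets T.
Proof. by apply/subsetP => e; rewrite !inE => /andP []. Qed.

Lemma rand_weight_sub (X : finType) (U G : {set X}) : G \subset U ->
  rand_weight p U G = p ^+ #|G| * (1 - p) ^+ (#|U| - #|G|).
Proof.
move=> sGU; rewrite /rand_weight (bigID (mem G)) /=.
rewrite (eq_bigr (fun => p)) => [|x /andP [_ ->] //].
rewrite [X in _ * X](eq_bigr (fun => 1 - p)) => [|x /andP [_ /negbTE ->] //].
rewrite (eq_bigl (mem (U :&: G))) => [|x]; last by rewrite !inE.
rewrite [X in _ * X](eq_bigl (mem (U :\: G))) => [|x]; last by rewrite !inE andbC.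
by rewrite !prodr_const cardsD (setIidPr sGU).
Qed.

Lemma mu_rand_expect (T : finType) (C : pred (hypergraph T)) :
  mu r p C = rand_expect p (rsets T) (fun S => (C S)%:R).
Proof.
rewrite /mu /rand_expect big_mkcondr /=.
have uniformE G : uniform r G = (G \subset rsets T).
  by apply/forall_inP/subsetP => uG e /uG; rewrite inE.
apply: eq_big => [G|G]; first by rewrite uniformE.
rewrite uniformE => sG.
by rewrite rand_weight_sub // card_draws; case: (C G); rewrite ?mulr1 ?mulr0.
Qed.

Lemma mu_ge0 (T : finType) (C : pred (hypergraph T)) :
  0 <= p <= 1 -> 0 <= mu r p C.
Proof.
by case/andP=> p_ge0 p_le1; rewrite mu_rand_expect; apply: rand_expect_ge0 => // S _.
Qed.

Lemma mu_le1 (T : finType) (C : pred (hypergraph T)) :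
  0 <= p <= 1 -> mu r p C <= 1.
Proof.
case/andP=> p_ge0 p_le1; rewrite mu_rand_expect -[X in _ <= X](rand_expect1 p (rsets T)).
by apply: ler_rand_expect => // S _; case: (C S).
Qed.

Lemma induced_setI_rsets_in (T : finType) (D : {set T}) (S : hypergraph T) :
  S \subset rsets T -> induced S D = induced (S :&: rsets_in D) D.
Proof.
move=> sS; apply/setP => e; rewrite !inE.
case eS: (_ \in S) => //=.
have := subsetP sS _ eS; rewrite inE => -> /=.
by apply/esym/subsetP => y /imsetP [z _ ->]; exact: valP z.
Qed.

Lemma contains_iso (F : hfamily) (T1 T2 : finType) (sg : T1 -> T2) (rh : T2 -> T1)
    (H1 : hypergraph T1) (H2 : hypergraph T2) :
  cancel sg rh -> cancel rh sg -> (forall e, (e \in H1) = (sg @: e \in H2)) ->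
  contains F H1 <-> contains F H2.
Proof.
move=> sgK rhK H12; split => [[k [f [f_inj Fk]]]|[k [g [g_inj Fk]]]].
  exists k, (sg \o f); split; first exact: inj_comp (can_inj sgK) f_inj.
  suff -> : [set e : {set 'I_k} | (sg \o f) @: e \in H2] = [set e : {set 'I_k} | f @: e \in H1] by [].
  by apply/setP => e; rewrite !inE imset_comp H12.
exists k, (rh \o g); split; first exact: inj_comp (can_inj rhK) g_inj.
suff -> : [set e : {set 'I_k} | (rh \o g) @: e \in H1] = [set e : {set 'I_k} | g @: e \in H2] by [].
apply/setP => e; rewrite !inE H12 -!imset_comp.
by rewrite (eq_imset _ (fun x => rhK (g x))) imset_comp imset_id.
Qed.

(* Only the r-sets inside D matter, and relabelling D by 'I_#|D| identifies
   the random r-sets inside D with G(#|D|, p). *)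
Lemma rand_expect_free_induced (F : hfamily) (V : finType) (D : {set V}) :
  rand_expect p (rsets V) (fun S => (~~ `[< contains F (induced S D) >])%:R) =
  free_prob r p F #|D|.
Proof.
pose h (S : hypergraph V) : R := (~~ `[< contains F (induced S D) >])%:R.
rewrite (eq_rand_expect p (g := fun S => h (S :&: rsets_in D))); last first.
  by move=> S sS; rewrite /h -induced_setI_rsets_in.
rewrite rand_expect_restrict ?rsets_in_sub //.
have cD : #|{: {x | x \in D}}| = #|D| by rewrite card_sig.
pose sg (i : 'I_#|D|) : {x | x \in D} := enum_val (cast_ord (esym cD) i).
pose rh (x : {x | x \in D}) : 'I_#|D| := cast_ord cD (enum_rank x).
have sgK : cancel sg rh by move=> i; rewrite /sg /rh enum_valK cast_ordKV.
have rhK : cancel rh sg by move=> x; rewrite /sg /rh cast_ordK enum_rankK.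
pose phi (i : 'I_#|D|) := val (sg i).
have phi_inj : injective phi by move=> a b /val_inj /(can_inj sgK).
have -> : rsets_in D = (fun e : {set 'I_#|D|} => phi @: e) @: rsets 'I_#|D|.
  apply/setP => e; rewrite inE; apply/andP/imsetP => [[/eqP er eD]|[e1]].
    have ee : e = phi @: (phi @^-1: e).
      apply/setP => x; apply/idP/imsetP => [xe|[y]]; last by rewrite inE => ye ->.
      exists (rh (exist _ x (subsetP eD x xe))); last by rewrite /phi rhK.
      by rewrite inE /phi rhK.
    exists (phi @^-1: e) => //.
    by rewrite inE -(card_imset _ phi_inj) -ee er.
  rewrite inE => /eqP e1r ->; rewrite (card_imset _ phi_inj) e1r; split => //.
  by apply/subsetP => y /imsetP [z _ ->]; exact: valP (sg z).
rewrite rand_expect_imset; last exact: imset_inj.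
rewrite /free_prob mu_rand_expect; apply: eq_rand_expect => S _.
rewrite /h; congr (~~ _)%:R; apply: asbool_equiv_eq.
apply: iff_sym; apply: (contains_iso _ sgK rhK) => e.
by rewrite !inE -imset_comp mem_imset //; exact: imset_inj.
Qed.

Lemma partial_steiner_disjoint (V : finType) (m d : nat) (D : 'I_d -> {set V}) :
  partial_steiner r m D ->
  forall i j, i != j -> [disjoint rsets_in (D i) & rsets_in (D j)].
Proof.
case=> _ [_ hS] i j ij; rewrite disjoints_subset; apply/subsetP => e.
rewrite !inE => /andP [/eqP er ei]; apply/negP => /andP [_ ej].
have sij : [set i; j] \subset [set k | e \subset D k].
  by apply/subsetP => k; rewrite !inE => /orP [] /eqP ->.
by have := leq_trans (subset_leq_card sij) (hS e er); rewrite cards2 ij.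
Qed.

End RandomHypergraph.

Section FewGoodBlocks.
Variables (R : realType) (r : nat) (p : R) (F : hfamily) (V : finType).
Hypotheses (p_ge0 : 0 <= p) (p_le1 : p <= 1).
Variables (m d : nat) (D : 'I_d -> {set V}).
Hypothesis steinerD : partial_steiner r m D.

Local Notation E := (rand_expect p (rsets r V)).
Local Notation inD i S := `[< contains F (induced S (D i)) >].

Lemma card_block i : #|D i| = m.
Proof. by case: steinerD => _ []. Qed.

Lemma rand_expect_prod_blocks (z : R) : 1 <= z ->
  E (fun S => \prod_i (if inD i S then 1 else z)) <=
  (1 + (z - 1) * free_prob r p F m) ^+ d.
Proof.
move=> z_ge1.
rewrite (eq_rand_expect p (g := fun S => \prod_(i <- index_enum 'I_d)
    (fun i T => if inD i T then 1 else z) i (S :&: rsets_in r (D i)))); last first.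
  by move=> S sS; apply: eq_bigr => i _ /=; rewrite -induced_setI_rsets_in.
rewrite (rand_expect_prod p (B := fun i => rsets_in r (D i))
  (fun i T => if inD i T then 1 else z)) ?index_enum_uniq //; last 2 first.
- by move=> i _; exact: rsets_in_sub.
- by move=> i j _ _; exact: partial_steiner_disjoint steinerD i j.
rewrite -[in X in _ <= X](card_ord d) -prodr_const.
apply: ler_prod => i _; apply/andP; split.
  by apply: rand_expect_ge0 => // S _; case: ifP => // _; lra.
rewrite -(rand_expect_restrict p _ (rsets_in_sub r (D i))).
rewrite (eq_rand_expect p (g := fun S => 1 + (z - 1) * (~~ inD i S)%:R)); last first.
  move=> S sS /=; rewrite -induced_setI_rsets_in //.
  by case: (`[< _ >]); rewrite /= ?mulr0 ?addr0 // mulr1 addrC subrK.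
by rewrite rand_expectD rand_expect1 rand_expectZ rand_expect_free_induced card_block.
Qed.

Variable a : R.
Hypotheses (a_le0 : a <= 0) (free_le : free_prob r p F m <= 2 `^ a).

Lemma rand_expect_prod_blocks_le :
  E (fun S => \prod_i (if inD i S then 1 else 2 `^ (- a))) <= 2 ^+ d.
Proof.
have z1_ge0 : 0 <= 2 `^ (- a) - 1 by rewrite subr_ge0 powR2_ge1 ?oppr_ge0.
apply: le_trans (rand_expect_prod_blocks (powR2_ge1 _)) _; first by rewrite oppr_ge0.
apply: lerXn2r; rewrite ?nnegrE ?addr_ge0 ?mulr_ge0 ?mu_ge0 ?p_ge0 //.
have za : 2 `^ (- a) * 2 `^ a = 1 by rewrite -powR2D addNr powRr0.
have := ler_wpM2l z1_ge0 free_le; rewrite [X in _ <= X]mulrBl za mul1r.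
by have := powR_ge0 2 a; lra.
Qed.

Variables (A : {set hypergraph V}) (th : R).
Hypothesis th_gt0 : 0 < th.

Let w := mu r p (fun G => G \in A).

Lemma mu_le_few_good_blocks :
  #|[set i : 'I_d | th / 4 * w <= mu r p (fun G => (G \in A) && inD i G)]|%:R <
    th / 4 * d%:R ->
  w <= 2 `^ (d%:R + 1 + a * ((1 - th) * d%:R)).
Proof.
set I := [set i | _] => I_small.
have d_gt0 : 0 < d%:R :> R.
  by move: (le_lt_trans (ler0n _ _) I_small); rewrite pmulr_rgt0 // divr_gt0.
have p01 : 0 <= p <= 1 by rewrite p_ge0.
have w_ge0 : 0 <= w by exact: mu_ge0.
pose Y S : R := \sum_i (inD i S)%:R.
have EY : E (fun S => (S \in A)%:R * Y S) = \sum_i mu r p (fun G => (G \in A) && inD i G).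
  rewrite (eq_bigr _ (fun i _ => mu_rand_expect r p _)) -rand_expect_sum.
  apply: eq_rand_expect => S _; rewrite mulr_sumr.
  by apply: eq_bigr => i _; case: (S \in A); rewrite ?mul1r ?mul0r.
have EY_le : 2 * E (fun S => (S \in A)%:R * Y S) <= th * d%:R * w.
  have le_w i : mu r p (fun G => (G \in A) && inD i G) <= w.
    rewrite /w !mu_rand_expect; apply: ler_rand_expect => // S _.
    by rewrite ler_nat; case: (S \in A); case: (inD i S).
  have := sum_le_card_threshold (mulr_ge0 (divr_ge0 (ltW th_gt0) (ler0n _ 4)) w_ge0) le_w.
  rewrite -EY card_ord -/I; nra.
have markov : w <= 2 * E (fun S => (S \in A)%:R * (Y S <= th * d%:R)%R%:R).
  rewrite /w mu_rand_expect; apply: rand_expect_markov => //.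
  - exact: mulr_gt0.
  - by move=> S _; apply: sumr_ge0 => i _; exact: ler0n.
  by rewrite -mu_rand_expect.
have chernoff : E (fun S => (S \in A)%:R * (Y S <= th * d%:R)%R%:R) <=
    2 `^ (a * ((1 - th) * d%:R)) * E (fun S => \prod_i (if inD i S then 1 else 2 `^ (- a))).
  rewrite -rand_expectZ; apply: ler_rand_expect => // S _.
  have rhs_ge0 : 0 <= 2 `^ (a * ((1 - th) * d%:R)) *
                      \prod_i (if inD i S then 1 else 2 `^ (- a)).
    by apply: mulr_ge0; [|apply: prodr_ge0 => i _; case: ifP]; rewrite ?powR_ge0.
  case: (S \in A); case: (leP (Y S) (th * d%:R)) => YS; rewrite ?mul0r ?mulr0 //.
  by rewrite mulr1 mulrBl mul1r -{1}(card_ord d); exact: chernoff_pointwise.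
have blocks := rand_expect_prod_blocks_le.
have -> : 2 `^ (d%:R + 1 + a * ((1 - th) * d%:R)) =
          2 * (2 `^ (a * ((1 - th) * d%:R)) * 2 ^+ d).
  by rewrite !powR2D powRr1 ?powR_mulrn //; ring.
apply: le_trans markov _; rewrite ler_pM2l //.
by apply: le_trans chernoff _; apply: ler_wpM2l blocks; exact: powR_ge0.
Qed.

End FewGoodBlocks.

Lemma ltn_bin_add (a r : nat) : (0 < r)%N -> (a < 'C(a + r, r))%N.
Proof.
case: r => // r _; elim: a => [|a IHa]; first by rewrite add0n binn.
rewrite addSn binS.
have : (0 < 'C(a + r.+1, r))%N by rewrite bin_gt0; lia.
by move: IHa; lia.
Qed.

Section Numerics.
Variable R : realType.

Lemma bin_mul_ge (b eps : R) (K n r : nat) : 0 < eps -> b / eps < K%:R ->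
  (0 < r)%N -> (K + r <= n)%N -> b <= 'C(n, r)%:R * eps.
Proof.
move=> eps_gt0 bK r_gt0 Krn.
have K_lt : (K < 'C(n, r))%N.
  have := ltn_bin_add (n - r) r_gt0; rewrite subnK; last by lia.
  by apply: leq_ltn_trans; lia.
rewrite -ler_pdivrMr //; apply: ltW; apply: lt_le_trans bK _.
by rewrite ler_nat ltnW.
Qed.

Definition threshold (c eps : R) := eps / (32 * (`|c| + 1) + 2 * eps).

Lemma thresholdP (c eps : R) : 0 < eps ->
  [/\ 0 < threshold c eps, threshold c eps <= 1 / 2
    & threshold c eps * (32 * c) <= eps].
Proof.
move=> eps_gt0; have c_abs := normr_ge0 c; have c_le := ler_norm c.
have den_gt0 : 0 < 32 * (`|c| + 1) + 2 * eps by lra.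
rewrite /threshold; split.
- exact: divr_gt0.
- by rewrite ler_pdivrMr //; lra.
- rewrite mulrAC ler_pdivrMr //; nra.
Qed.

Lemma counting_exponent_le (c eps th M Nn d : R) :
  0 < eps -> eps / 2 <= c -> 0 < th -> th <= 1 / 2 -> th * (32 * c) <= eps ->
  16 <= M * eps -> 16 <= Nn * eps -> 0 <= d -> (1 - th) * Nn <= d * M ->
  d + 1 + (- c + eps / 8) * M * ((1 - th) * d) <= (- c + eps) * Nn.
Proof.
move=> eps_gt0 c_ge th_gt0 th_le th_c Meps Neps d_ge0 dM.
have M_gt0 : 0 < M by nra.
set K := 1 - (c - eps / 8) * M * (1 - th).
have K_le0 : K <= 0.
  have cM_ge : 3 * eps / 8 * M * (1 / 2) <= (c - eps / 8) * M * (1 / 2) by nra.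
  have cM_th_ge : (c - eps / 8) * M * (1 / 2) <= (c - eps / 8) * M * (1 - th) by nra.
  by rewrite /K; lra.
have -> : d + 1 + (- c + eps / 8) * M * ((1 - th) * d) = 1 + d * K by rewrite /K; ring.
have dM_K : d * M * K <= (1 - th) * Nn * K by nra.
have sq_ge : c - eps / 8 - eps / 16 <= (1 - th) ^+ 2 * (c - eps / 8).
  have : (1 - 2 * th) * (c - eps / 8) <= (1 - th) ^+ 2 * (c - eps / 8) by nra.
  by nra.
have sq_ge_NM : (c - eps / 8 - eps / 16) * (Nn * M) <= (1 - th) ^+ 2 * (c - eps / 8) * Nn * M.
  by have := ler_wpM2r (ltW (mulr_gt0 (ltr0n R 1) M_gt0)) sq_ge; nra.
rewrite -(ler_pM2l M_gt0).
have : M <= M * Nn * eps / 16 by nra.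
have : Nn <= M * Nn * eps / 16 by nra.
rewrite /K in dM_K *; nra.
Qed.

End Numerics.

Theorem lemma5 (R : realType) (r : nat) (F : hfamily) (p eps c : R) :
  (2 <= r)%N ->
  (forall k (H : hypergraph 'I_k), F k H -> uniform r H) ->
  0 < p -> p < 1 -> 0 < eps ->
  is_c r p F c ->
  exists (eta gamma lambda : R) (m n0 : nat),
    [/\ 0 < eta, 0 < gamma & 0 < lambda] /\
    forall (V : finType) (n : nat), #|V| = n -> (n0 < n)%N ->
    forall A : {set hypergraph V},
      (forall G, G \in A -> uniform r G) ->
      mu r p (fun G => G \in A) > powR 2 ((- c + eps) * ('C(n, r))%:R) ->
    forall (d : nat) (D : 'I_d -> {set V}),
      partial_steiner r m D ->
      d%:R >= (1 - lambda) * ('C(n, r))%:R / ('C(m, r))%:R ->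
      let I := [set i : 'I_d |
                 mu r p (fun G => (G \in A) && `[< contains F (induced G (D i)) >])
                   >= gamma * mu r p (fun G => G \in A)] in
      #|I|%:R >= eta * d%:R.
Proof.
move=> r_ge2 _ p_gt0 p_lt1 eps_gt0 hc.
have p01 : 0 <= p <= 1 by rewrite !ltW.
have r_gt0 : (0 < r)%N by apply: leq_trans r_ge2.
have [N hN] := hc (eps / 8) (divr_gt0 eps_gt0 (ltr0n _ 8)).
have [th_gt0 th_le th_c] := thresholdP c eps_gt0; set th := threshold c eps in th_gt0 th_le th_c *.
pose K := (Num.truncn (16 / eps)).+1.
have K_gt : 16 / eps < K%:R by exact: truncnS_gt.
exists (th / 4), (th / 4), th, (N + K + r)%N, (K + r)%N.
split; first by split; lra.
move=> V n _ n_gt A _ mu_gt d D steinerD d_ge /=.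
rewrite leNgt; apply/negP => I_small.
set M : R := ('C(N + K + r, r))%:R in d_ge *; set Nn : R := ('C(n, r))%:R in mu_gt d_ge.
have M_eps : 16 <= M * eps by apply: bin_mul_ge K_gt _ _; rewrite // -addnA leq_addl.
have N_eps : 16 <= Nn * eps by apply: bin_mul_ge K_gt _ _; rewrite // ltnW.
have [c_lt|c_ge] := ltP c (eps / 2).
  have rhs_ge1 : 1 <= 2 `^ ((- c + eps) * Nn).
    by apply: powR2_ge1; apply: mulr_ge0 => //; lra.
  by have := mu_le1 r (fun G => G \in A) p01; lra.
have M_gt0 : 0 < M by rewrite ltr0n bin_gt0 leq_addl.
have free_le := (hN (N + K + r)%N (leq_trans (leq_addr K N) (leq_addr r _))).2.
have a_le0 : (- c + eps / 8) * M <= 0 by apply: mulr_le0_ge0; lra.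
have mu_le := mu_le_few_good_blocks (ltW p_gt0) (ltW p_lt1) steinerD a_le0 free_le
                th_gt0 I_small.
have dM : (1 - th) * Nn <= d%:R * M by rewrite -ler_pdivrMr.
have := counting_exponent_le eps_gt0 c_ge th_gt0 th_le th_c M_eps N_eps (ler0n _ d) dM.
move=> /ler_powR2 /(le_trans mu_le) /(lt_le_trans mu_gt).
by rewrite ltxx.
Qed.
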